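(* If $G$ is a connected graph, then $\mathrm{gp}(G)\ge \omega(G_{\rm SR})$. Moreover, equality holds if and only if $G$ contains a gp-set that induces a complete subgraph of $G_{\rm SR}$.
   Context: All graphs are finite and simple. For a connected graph $G$, $d_G(u,v)$ is the distance between $u$ and $v$, and a geodesic is a shortest path. A set $S\subseteq V(G)$ is a general position set if no three pairwise distinct vertices of $S$ lie on a common geodesic of $G$; $\mathrm{gp}(G)$ is the maximum cardinality of a general position set, and a gp-set is a general position set of cardinality $\mathrm{gp}(G)$. A vertex $u$ is maximally distant from a vertex $v$ if every neighbor $w$ of $u$ satisfies $d_G(v,w)\le d_G(u,v)$; $u$ and $v$ are mutually maximally distant (MMD) if each is maximally distant from the other. The strong resolving graph $G_{\rm SR}$ has vertex set $V(G)$, two distinct vertices being adjacent in $G_{\rm SR}$ iff they are MMD in $G$. $\omega$ denotes the clique number. *)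

From mathcomp Require Import all_boot.
From Stdlib Require Import ClassicalEpsilon.
Set Implicit Arguments. Unset Strict Implicit. Unset Printing Implicit Defensive.

Definition pbool (P : Prop) : bool :=
  if excluded_middle_informative P then true else false.

Section Graph.
Variables (T : finType) (e : rel T).

Definition simple_graph := symmetric e /\ irreflexive e.

Definition connected_graph := forall x y : T, connect e x y.

Fixpoint ball (x : T) (k : nat) : {set T} :=
  match k with
  | 0 => [set x]
  | k'.+1 => ball x k' :|: [set z | [exists w in ball x k', e w z]]
  end.

(* d_G(x,y): least k with y in ball x k (k ranges over 0..#|T|-1,
   which suffices in a connected graph). *)
Definition dist (x y : T) : nat := find (fun k => y \in ball x k) (iota 0 #|T|).

Definition geodesic (a b : T) (p : seq T) : Prop :=
  path e a p /\ last a p = b /\ size p = dist a b.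

Definition on_common_geodesic (u v w : T) : Prop :=
  exists a b p, geodesic a b p /\ u \in a :: p /\ v \in a :: p /\ w \in a :: p.

Definition gp_set (S : {set T}) : Prop :=
  forall u v w, u \in S -> v \in S -> w \in S ->
    u != v -> v != w -> u != w -> ~ on_common_geodesic u v w.

Definition gp_number : nat :=
  \max_(S : {set T} | pbool (gp_set S)) #|S|.

Definition gp_setmax (S : {set T}) : Prop := gp_set S /\ #|S| = gp_number.

Definition maximally_distant (u v : T) : Prop :=
  forall w, e u w -> dist v w <= dist u v.

Definition MMD (u v : T) : Prop := maximally_distant u v /\ maximally_distant v u.

Definition SR_adj (u v : T) : Prop := u != v /\ MMD u v.

Definition SR_clique (S : {set T}) : Prop :=
  forall u v, u \in S -> v \in S -> u != v -> SR_adj u v.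

Definition omega_SR : nat :=
  \max_(S : {set T} | pbool (SR_clique S)) #|S|.

End Graph.

(* If y is an interior vertex of a geodesic and x is another vertex of it,
   then one of the two neighbours of y on the geodesic is farther from x than
   y is, so y is not maximally distant from x.  Among three distinct vertices
   of a geodesic at least one is interior, hence every clique of the strong
   resolving graph, in particular a maximum one, is in general position. *)
From mathcomp Require Import all_boot zify.
From Stdlib Require Import ClassicalEpsilon.
Set Implicit Arguments. Unset Strict Implicit. Unset Printing Implicit Defensive.

Lemma pboolP (P : Prop) : reflect P (pbool P).
Proof. by rewrite /pbool; case: excluded_middle_informative; constructor. Qed.

Section Distance.
Variables (T : finType) (e : rel T).

Lemma mem_ball x y k :
  y \in ball e x k <-> exists p, [/\ path e x p, last x p = y & size p <= k].
Proof.
elim: k y => [|k IHk] y /=.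
  rewrite in_set1; split=> [/eqP ->|[[|z q] [_ <- //]]]; first by exists [::].
rewrite in_setU in_set; split.
- case/orP=> [/IHk [p [xp <- /leqW]]|/existsP [w /andP [/IHk [p [xp pw ltpk]] ewy]]].
    by exists p.
  exists (rcons p y); rewrite rcons_path last_rcons size_rcons xp pw ewy.
  by split.
- case=> p []; case/lastP: p => [|p z] /=.
    by move=> _ <- _; apply/orP; left; apply/IHk; exists [::].
  rewrite rcons_path last_rcons size_rcons ltnS => /andP [xp epz] <- ltpk.
  apply/orP; right; apply/existsP; exists (last x p); rewrite epz andbT.
  by apply/IHk; exists p.
Qed.

Lemma dist_leq_size x p : path e x p -> dist e x (last x p) <= size p.
Proof.
move=> xp; rewrite /dist; have [ltpT|] := ltnP (size p) #|T|; last first.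
  by apply: leq_trans; rewrite -[X in _ <= X](size_iota 0) find_size.
rewrite leqNgt; apply/negP => /(before_find 0).
rewrite nth_iota // add0n => /negbT/negP; apply; apply/mem_ball.
by exists p.
Qed.

Lemma path_segment x0 x p i j :
  path e x p -> i <= j <= size p ->
  exists r, [/\ path e (nth x0 (x :: p) i) r,
                last (nth x0 (x :: p) i) r = nth x0 (x :: p) j & size r = j - i].
Proof.
elim: p x i j => [|y p IHp] x [|i] [|j] //=; try by exists [::].
- by rewrite andbF.
- case/andP=> exy yp ltjp.
  have [r [yr <- rj]] := IHp y 0 j yp ltjp.
  by exists (y :: r); rewrite /= exy yr rj !subn0.
- by case/andP=> _ yp; apply: IHp.
Qed.

Lemma dist_nth_leq x p i j :
  path e x p -> i <= j <= size p ->
  dist e (nth x (x :: p) i) (nth x (x :: p) j) <= j - i.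
Proof.
move=> xp ijp; have [r [qr <- <-]] := path_segment x xp ijp.
exact: dist_leq_size.
Qed.

Hypothesis e_conn : connected_graph e.

Lemma dist_lt_card x y : dist e x y < #|T|.
Proof.
have /connectP [p xp ->] := e_conn x y.
have [q xq uq _] := shortenP xp.
apply: leq_ltn_trans (dist_leq_size xq) _.
by rewrite -ltnS -[(size q).+1]/(size (x :: q)) -(card_uniqP uq) ltnS max_card.
Qed.

Lemma shortest_walk x y :
  exists p, [/\ path e x p, last x p = y & size p = dist e x y].
Proof.
have found : y \in ball e x (dist e x y).
  have hasy : has (fun k => y \in ball e x k) (iota 0 #|T|).
    by rewrite has_find size_iota dist_lt_card.
  by have := nth_find 0 hasy; rewrite nth_iota ?dist_lt_card.
have /mem_ball [p [xp py le_p]] := found.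
exists p; split=> //; apply/eqP; rewrite eqn_leq le_p -py.
exact: dist_leq_size.
Qed.

Lemma dist_triangle x y z : dist e x z <= dist e x y + dist e y z.
Proof.
have [p [xp py <-]] := shortest_walk x y.
have [q [yq qz <-]] := shortest_walk y z.
have := @dist_leq_size x (p ++ q).
by rewrite cat_path last_cat size_cat xp py yq qz; apply.
Qed.

Hypothesis e_sym : symmetric e.

Lemma dist_sym x y : dist e x y = dist e y x.
Proof.
suff dist_leq a b : dist e a b <= dist e b a.
  by apply/eqP; rewrite eqn_leq !dist_leq.
have [p [bp pa <-]] := shortest_walk b a.
have rev_walk : path e a (rev (belast b p)).
  by rewrite -pa rev_path (@eq_path _ _ e) // => u v; apply: e_sym.
have rev_walk_end : last a (rev (belast b p)) = b.
  by rewrite -pa -(last_cons b) -rev_rcons -lastI rev_cons last_rcons.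
by have := dist_leq_size rev_walk; rewrite rev_walk_end size_rev size_belast.
Qed.

Lemma geodesic_dist_nth a b p i j :
  geodesic e a b p -> i <= j <= size p ->
  dist e (nth a (a :: p) i) (nth a (a :: p) j) = j - i.
Proof.
move=> [ap [pb size_p]] ijp.
apply/eqP; rewrite eqn_leq dist_nth_leq //=.
have d_ai : dist e a (nth a (a :: p) i) <= i - 0.
  by apply: (dist_nth_leq (i := 0) ap); lia.
have d_jb : dist e (nth a (a :: p) j) b <= size p - j.
  by rewrite -pb (last_nth a); apply: dist_nth_leq; lia.
have := dist_triangle a (nth a (a :: p) i) b.
have := dist_triangle (nth a (a :: p) i) (nth a (a :: p) j) b.
lia.
Qed.

Lemma geodesic_interior_not_maximally_distant a b p i j :
  geodesic e a b p -> i <= size p -> 0 < j < size p -> i != j ->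
  ~ maximally_distant e (nth a (a :: p) j) (nth a (a :: p) i).
Proof.
move=> gp le_ip /andP [lt0j lt_jp]; have [ap _] := gp.
rewrite neq_ltn => /orP [lt_ij|lt_ji] far_j.
- have := far_j _ (pathP a ap j lt_jp).
  rewrite [X in _ <= X]dist_sym -[nth a p j]/(nth a (a :: p) j.+1).
  by rewrite !(geodesic_dist_nth gp); lia.
- case: j lt0j lt_jp lt_ji far_j => [//|j] _ lt_jp lt_ji far_j.
  have := pathP a ap j (ltnW lt_jp); rewrite e_sym => /far_j.
  by rewrite [X in X <= _]dist_sym !(geodesic_dist_nth gp); lia.
Qed.

Lemma SR_clique_gp_set (S : {set T}) : SR_clique e S -> gp_set e S.
Proof.
move=> cliqueS u v w uS vS wS uv vw uw [a [b [p [gp [uq [vq wq]]]]]].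
set q := a :: p in uq vq wq.
have index_le x : x \in q -> index x q <= size p by rewrite -index_mem.
have index_neq x y : x \in q -> y \in q -> x != y -> index x q != index y q.
  by move=> xq yq; rewrite (inj_in_eq (@index_inj _ a q)).
have interior_not_clique x y : x \in S -> y \in S -> x \in q -> y \in q ->
    y != x -> 0 < index y q < size p -> False.
  move=> xS yS xq yq yx y_inner; have [_ [far_y _]] := cliqueS y x yS xS yx.
  rewrite -(nth_index a xq) -(nth_index a yq) in far_y.
  apply: (geodesic_interior_not_maximally_distant gp _ y_inner _ far_y).
    exact: index_le.
  by rewrite eq_sym index_neq.
have one_interior : [|| 0 < index u q < size p, 0 < index v q < size p
                      | 0 < index w q < size p].
  have := index_neq u v uq vq uv; have := index_neq v w vq wq vw.
  have := index_neq u w uq wq uw.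
  have := index_le u uq; have := index_le v vq; have := index_le w wq.
  lia.
case/or3P: one_interior => [u_inner|v_inner|w_inner].
- by apply: (interior_not_clique v u); rewrite // eq_sym.
- by apply: (interior_not_clique u v); rewrite // eq_sym.
- by apply: (interior_not_clique u w); rewrite // eq_sym.
Qed.

End Distance.

Section Maxima.
Variables (T : finType) (e : rel T).

Lemma leq_gp_number (S : {set T}) : gp_set e S -> #|S| <= gp_number e.
Proof. by move/pboolP; apply: leq_bigmax_cond. Qed.

Lemma leq_omega_SR (S : {set T}) : SR_clique e S -> #|S| <= omega_SR e.
Proof. by move/pboolP; apply: leq_bigmax_cond. Qed.

Lemma omega_SR_attained : exists2 S : {set T}, SR_clique e S & #|S| = omega_SR e.
Proof.
have some_clique : 0 < #|[pred S : {set T} | pbool (SR_clique e S)]|.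
  by apply/card_gt0P; exists set0; rewrite inE; apply/pboolP => u v; rewrite inE.
have [S] := eq_bigmax_cond (fun S : {set T} => #|S|) some_clique.
by rewrite inE => /pboolP cliqueS maxS; exists S; last exact: esym maxS.
Qed.

End Maxima.

Theorem theorem3p1 (T : finType) (e : rel T) :
  simple_graph e -> connected_graph e ->
  omega_SR e <= gp_number e /\
  (gp_number e = omega_SR e <-> exists S : {set T}, gp_setmax e S /\ SR_clique e S).
Proof.
move=> [e_sym _] e_conn.
have clique_gp S : SR_clique e S -> gp_set e S by apply: SR_clique_gp_set.
have omega_le_gp : omega_SR e <= gp_number e.
  by apply/bigmax_leqP => S /pboolP /clique_gp /leq_gp_number.
split=> //; split=> [gp_eq | [S [[_ gpS] cliqueS]]].
- have [S cliqueS cardS] := omega_SR_attained e.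
  by exists S; split=> //; split; [exact: clique_gp | rewrite cardS gp_eq].
- by apply/eqP; rewrite eqn_leq omega_le_gp -gpS leq_omega_SR.
Qed.
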